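(* Fix $k\in\mathbb{Z}_{\geq0}$. For integers $0\leq i\leq r\leq k$, in $\mathcal{A}_k$ we have $$h_{r-i}e_i=\underline{V_i^r}+\underline{V_{i-1}^r}+\underline{U_{i-1}^r}.$$
   Context: Indices are elements of $\mathbb{Z}/(k+1)\mathbb{Z}$, identified with $[0,k]$. $\mathcal{A}_k$ is the associative $\mathbb{Z}$-algebra with generators $A_0,\dots,A_k$ subject only to $A_iA_{i+1}A_i=A_{i+1}A_iA_{i+1}$ for all $i$ and $A_iA_j=A_jA_i$ whenever $i-j\not\equiv\pm1\pmod{k+1}$. A word $A_{i_1\dots i_m}$ is a sequence of indices with value $A_{i_1}\cdots A_{i_m}$, weak length $m$ and support $\{i_1,\dots,i_m\}$. For a proper subset $A\subsetneq[0,k]$ with $|A|=s$, $d_A=A_{i_1\dots i_s}$ and $i_A=A_{i_s\dots i_1}$, where $(i_1,\dots,i_s)$ is any ordering of $A$ such that whenever $i,i+1\in A$, $i+1$ occurs before $i$ (these do not depend on the choice; $d_\emptyset=i_\emptyset=1$). Noncommutative symmetric functions: $h_s=\sum_{A\in\binom{[0,k]}{s}}d_A$ and $e_s=\sum_{A\in\binom{[0,k]}{s}}i_A$. For a proper subset $S$, with $a$ the smallest element of $[0,k]$ not in $S$, $I_S$ is the total order $a+1<\dots<k<0<\dots<a-1$. A word $u=A_{i_1\dots i_m}$ with proper support is a weak hook word of hook type $V$ (resp. $U$) if with respect to $I_{supp(u)}$, for some $j$, $i_1>\dots>i_j<i_{j+1}<\dots<i_m$ (resp. $i_1>\dots>i_j=i_{j+1}<\dots<i_m$);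 $asc(u)$ is the number of $t$ with $i_t<i_{t+1}$. $X^r_i$ ($X\in\{U,V\}$) is the set of weak hook words of hook type $X$, length $r$, and $asc=i$ (empty for $i<0$). For a finite set $S$ of words, $\underline{S}=\sum_{u\in S}u\in\mathcal{A}_k$. *)

From mathcomp Require Import all_boot all_order all_algebra.
Set Implicit Arguments. Unset Strict Implicit. Unset Printing Implicit Defensive.
Import GRing.Theory Num.Theory.
Local Open Scope ring_scope.

(* Indices are elements of Z/(k+1)Z, represented by 'I_k.+1. *)
Definition word (k : nat) := seq 'I_k.+1.

(* Formal Z-linear combinations of words: elements of the free associative
   Z-algebra on A_0..A_k, represented as lists of (coefficient, word). *)
Definition fsum (k : nat) := seq (int * word k).

Definition coef k (e : fsum k) (w : word k) : int :=
  \sum_(t <- e) (if t.2 == w then t.1 else 0).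

Definition fadd k (e1 e2 : fsum k) : fsum k := e1 ++ e2.
Definition fmul k (e1 e2 : fsum k) : fsum k :=
  [seq (t1.1 * t2.1, t1.2 ++ t2.2) | t1 <- e1, t2 <- e2].
(* the underline of a finite list of (distinct) words *)
Definition fwords k (ws : seq (word k)) : fsum k := [seq (1, w) | w <- ws].

(* Defining relations of A_k:  A_i A_{i+1} A_i = A_{i+1} A_i A_{i+1} for all i,
   and A_i A_j = A_j A_i whenever i - j is not congruent to +-1 mod k+1. *)
Definition is_rel k (l r : word k) : bool :=
  [exists i : 'I_k.+1, (l == [:: i; ordS i; i]) && (r == [:: ordS i; i; ordS i])]
  || [exists i : 'I_k.+1, exists j : 'I_k.+1,
        [&& ordS i != j, ordS j != i & (l == [:: i; j]) && (r == [:: j; i])]].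

(* A generator u (l - r) v of the two-sided ideal, with coefficient c *)
Definition ideal_term k (t : int * word k * (word k * word k) * word k) (w : word k) : int :=
  let: (c, u, (l, r), v) := t in
  c * (((u ++ l ++ v) == w)%:R - ((u ++ r ++ v) == w)%:R).

(* Equality in A_k = free algebra modulo the two-sided ideal generated by the
   relations: e1 - e2 is a Z-linear combination of elements u (l - r) v. *)
Definition eqA k (e1 e2 : fsum k) : Prop :=
  exists s : seq (int * word k * (word k * word k) * word k),
    all (fun t => is_rel t.1.2.1 t.1.2.2) s /\
    forall w : word k, coef e1 w - coef e2 w = \sum_(t <- s) ideal_term t w.

(* a = smallest element of [0,k] not in S (for S proper) *)
Definition mex k (S : {set 'I_k.+1}) : nat :=
  find (fun n => (inord n : 'I_k.+1) \notin S) (iota 0 k.+1).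

(* position of x in the total order I_S : a+1 < ... < k < 0 < ... < a-1 *)
Definition rk k (S : {set 'I_k.+1}) (x : 'I_k.+1) : nat :=
  ((x + k - mex S) %% k.+1)%N.

(* d_A : elements of A in decreasing I_A-order (then i+1 precedes i whenever
   i, i+1 in A); i_A is the reverse word. *)
Definition dA k (A : {set 'I_k.+1}) : word k :=
  sort (fun x y => (rk A y <= rk A x)%N) (enum A).
Definition iA k (A : {set 'I_k.+1}) : word k := rev (dA A).

Definition ncsym_h k (s : nat) : fsum k :=
  fwords [seq dA A | A <- enum [pred A : {set 'I_k.+1} | #|A| == s]].
Definition ncsym_e k (s : nat) : fsum k :=
  fwords [seq iA A | A <- enum [pred A : {set 'I_k.+1} | #|A| == s]].

Definition supp k (u : word k) : {set 'I_k.+1} := [set x | x \in u].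
Definition proper_supp k (u : word k) : bool := supp u != [set: 'I_k.+1].

Definition ltI k (u : word k) (x y : 'I_k.+1) : bool := (rk (supp u) x < rk (supp u) y)%N.
Definition gtI k (u : word k) (x y : 'I_k.+1) : bool := ltI u y x.

(* hook type V: i_1 > ... > i_j < i_{j+1} < ... < i_m (w.r.t. I_supp(u)) *)
Definition hookV k (u : word k) : bool :=
  [exists j : 'I_(size u).+1,
     sorted (gtI u) (take j u) && sorted (ltI u) (drop j.-1 u)].
(* hook type U: i_1 > ... > i_j = i_{j+1} < ... < i_m, 1 <= j < m *)
Definition hookU k (u : word k) : bool :=
  [exists j : 'I_(size u),
     [&& (0 < j)%N, nth ord0 u j.-1 == nth ord0 u j,
         sorted (gtI u) (take j u) & sorted (ltI u) (drop j u)]].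

Definition asc k (u : word k) : nat :=
  \sum_(t < (size u).-1) (ltI u (nth ord0 u t) (nth ord0 u t.+1)).

(* underline of X^r_i (X = V or U), i an integer (empty set if i < 0) *)
Definition Vset k (r : nat) (i : int) : fsum k :=
  fwords [seq val t | t <- enum [pred t : r.-tuple 'I_k.+1 |
            [&& proper_supp (val t), hookV (val t) & (asc (val t))%:Z == i]]].
Definition Uset k (r : nat) (i : int) : fsum k :=
  fwords [seq val t | t <- enum [pred t : r.-tuple 'I_k.+1 |
            [&& proper_supp (val t), hookU (val t) & (asc (val t))%:Z == i]]].

Arguments ncsym_h : clear implicits.
Arguments ncsym_e : clear implicits.
Arguments Vset : clear implicits.
Arguments Uset : clear implicits.

From mathcomp Require Import all_boot all_order all_algebra.
From mathcomp Require Import zify.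
Set Implicit Arguments. Unset Strict Implicit. Unset Printing Implicit Defensive.
Import GRing.Theory.

(* Expanding the product, h_{r-i} e_i is the sum of the words d_A i_B over the
   pairs (A, B) with |A| = r - i and |B| = i.  Since |A ∪ B| <= r <= k, the set
   A ∪ B is proper, and commutations alone turn d_A i_B into [split_word A B]: the
   letters of A in decreasing, then those of B in increasing I_{A ∪ B}-order.  Only
   commuting letters move, because x + 1 precedes x both in d_A and in the
   decreasing I_{A ∪ B}-listing of A (and dually for B).  The word [split_word A B]
   determines (A, B), and these words are exactly the words of length r that are
   I_supp-decreasing on their first r - i letters and increasing on the rest.  Such
   a word is either a V-hook word with its valley at position r - i or r - i + 1
   (so with i or i - 1 ascents), or a U-hook word whose repeated letter sits at
   positions r - i and r - i + 1 (so with i - 1 ascents), and conversely. *)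

Lemma uniq_subseq2 (T : eqType) (s : seq T) x y :
  uniq s -> subseq [:: x; y] s -> subseq [:: y; x] s -> x = y.
Proof.
elim: s => //= z s IH /andP[zs us].
have zNs a : ~~ subseq [:: a; z] s.
  by apply/negP => /mem_subseq/(_ z); rewrite !inE eqxx orbT (negbTE zs) => /(_ isT).
case: (x =P z) => [->|/eqP nx]; case: (y =P z) => [->|/eqP ny] //.
- by move=> _; move/negP: (zNs y).
- by move/negP: (zNs x).
- exact: IH.
Qed.

Lemma sorted_strict (T : eqType) (le lt : rel T) (s : seq T) :
  (forall a b, a != b -> le a b -> lt a b) -> uniq s -> sorted le s -> sorted lt s.
Proof.
move=> le_lt; case: s => //= a s; elim: s a => //= b s IH a /andP[aNbs us] /andP[ab bs].
rewrite le_lt ?IH //; apply: contraNneq aNbs => ->; exact: mem_head.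
Qed.

Lemma sorted_geq_subseq (T : eqType) (f : T -> nat) (s : seq T) (x y : T) :
  sorted (fun a b => f b <= f a)%N s -> x \in s -> y \in s -> (f x < f y)%N ->
  subseq [:: y; x] s.
Proof.
elim: s => //= z s IH zs; rewrite !in_cons => xzs yzs fxy.
have fz : {in s, forall b, f b <= f z}%N.
  by apply/allP/(order_path_min _ zs) => a b c ba cb; apply: leq_trans cb ba.
case: (y =P z) => [yz|/eqP yz].
  rewrite sub1seq; case/orP: xzs => // /eqP xz.
  by move: fxy; rewrite xz yz ltnn.
have ys : y \in s by move: yzs; rewrite (negbTE yz).
apply: IH => //; first exact: path_sorted zs.
by case/orP: xzs => // /eqP xz; move: (fz y ys); rewrite -xz leqNgt fxy.
Qed.

Lemma sorted_nth_neq (T : eqType) (r : rel T) (s : seq T) x0 i :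
  irreflexive r -> sorted r s -> (i.+1 < size s)%N -> nth x0 s i != nth x0 s i.+1.
Proof.
case: s => // a s irr /(pathP x0) adj /adj; apply: contraTneq => ->; exact/negbT/irr.
Qed.

Lemma sorted_rcons_rcons (T : Type) (r : rel T) s a b :
  sorted r (rcons s a) -> r a b -> sorted r (rcons (rcons s a) b).
Proof.
case: s => [|c s] /=; first by move=> _ ->.
by rewrite !rcons_path last_rcons => -> ->.
Qed.

Lemma count_uniq_single (T : eqType) (s : seq T) (P : pred T) p0 : uniq s ->
  {in s, forall p, P p -> p = p0} -> count P s = ((p0 \in s) && P p0).
Proof.
elim: s => [|a s IH] //= /andP[aNs us] Pp0.
have {}IH := IH us (fun p ps => Pp0 p (@mem_behead _ (a :: s) _ ps)).
case Pa: (P a); last by rewrite add0n IH in_cons; case: eqP => // ->; rewrite Pa !andbF.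
by rewrite IH -(Pp0 a (mem_head _ _) Pa) (negbTE aNs) mem_head Pa.
Qed.

Lemma eq_Posz_pred (n i : nat) : (Posz n == Posz i - 1)%R = (n.+1 == i).
Proof. by rewrite eq_sym subr_eq -PoszD eqz_nat addn1 eq_sym. Qed.

Section Ascents.
Variables (T : Type) (R : rel T).

Fixpoint nasc_from (a : T) (s : seq T) : nat :=
  if s is b :: s' then (R a b + nasc_from b s')%N else 0%N.

Definition nasc (s : seq T) : nat := if s is a :: s' then nasc_from a s' else 0%N.

Lemma nasc_from_cat a s1 s2 :
  nasc_from a (s1 ++ s2) = (nasc_from a s1 + nasc_from (last a s1) s2)%N.
Proof. by elim: s1 a => //= b s1 IH a; rewrite IH addnA. Qed.

Lemma nasc_cat s1 x s2 : nasc (s1 ++ x :: s2) = (nasc (rcons s1 x) + nasc (x :: s2))%N.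
Proof. by case: s1 => [|a s1] //=; rewrite nasc_from_cat -cats1 nasc_from_cat /= addn0 addnA. Qed.

Lemma nasc_sorted_none (R' : rel T) s :
  (forall a b, R' a b -> ~~ R a b) -> sorted R' s -> nasc s = 0%N.
Proof.
move=> R'R; case: s => //= a s; elim: s a => //= b s IH a /andP[ab bs].
by rewrite (negbTE (R'R _ _ ab)) IH.
Qed.

Lemma nasc_sorted s : sorted R s -> nasc s = (size s).-1.
Proof. by case: s => //= a s; elim: s a => //= b s IH a /andP[-> /IH->]. Qed.

End Ascents.

Section FreeAlgebra.
Variable k : nat.
Implicit Types (e f : fsum k) (u v w : word k).

Lemma coef_cat e f w : coef (e ++ f) w = (coef e w + coef f w)%R.
Proof. by rewrite /coef big_cat. Qed.

Lemma coef_fwords (ws : seq (word k)) w : coef (fwords ws) w = Posz (count (pred1 w) ws).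
Proof.
elim: ws => [|u ws IH]; first by rewrite /coef big_nil.
by rewrite /coef /= big_cons -/(coef _ _) IH PoszD; case: (u == w).
Qed.

Lemma fmul_fwords (T1 T2 : Type) (L1 : seq T1) (L2 : seq T2) (f : T1 -> word k) g :
  fmul (fwords (map f L1)) (fwords (map g L2)) =
  fwords [seq f p.1 ++ g p.2 | p <- [seq (a, b) | a <- L1, b <- L2]].
Proof.
elim: L1 => [|a L1 IH] //=; rewrite /fmul /= -/(fmul _ _) IH /fwords !map_cat.
by congr (_ ++ _); rewrite -!map_comp; apply: eq_map => b /=; rewrite mul1r.
Qed.

Lemma eqA_coef e f : (forall w, coef e w = coef f w) -> eqA e f.
Proof. by move=> ef; exists [::]; split=> // w; rewrite ef subrr big_nil. Qed.

Lemma eqA_trans e1 e2 e3 : eqA e1 e2 -> eqA e2 e3 -> eqA e1 e3.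
Proof.
case=> s1 [r1 h1] [s2 [r2 h2]]; exists (s1 ++ s2); split; first by rewrite all_cat r1 r2.
by move=> w; rewrite big_cat /= -h1 -h2 addrA subrK.
Qed.

Lemma eqA_cat e1 e2 f1 f2 : eqA e1 e2 -> eqA f1 f2 -> eqA (e1 ++ f1) (e2 ++ f2).
Proof.
case=> s1 [r1 h1] [s2 [r2 h2]]; exists (s1 ++ s2); split; first by rewrite all_cat r1 r2.
by move=> w; rewrite big_cat /= !coef_cat -h1 -h2 opprD addrACA.
Qed.

Inductive rewrites : word k -> word k -> Prop :=
| rewrites_refl u : rewrites u u
| rewrites_step p l r q v :
    is_rel l r -> rewrites (p ++ r ++ q) v -> rewrites (p ++ l ++ q) v.

Lemma rewrites_trans u v w : rewrites u v -> rewrites v w -> rewrites u w.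
Proof. by elim=> // p l r q v' hr _ IH /IH; apply: rewrites_step. Qed.

Lemma rewrites_ctx p q u v : rewrites u v -> rewrites (p ++ u ++ q) (p ++ v ++ q).
Proof.
elim=> [u'|p' l r q' v' hr _ IH]; first exact: rewrites_refl.
have E s : p ++ (p' ++ s ++ q') ++ q = (p ++ p') ++ s ++ (q' ++ q) by rewrite !catA.
by rewrite E; apply: rewrites_step hr _; rewrite -E.
Qed.

Lemma rewrites_cat u u' v v' : rewrites u u' -> rewrites v v' -> rewrites (u ++ v) (u' ++ v').
Proof.
move=> ru rv; apply: (@rewrites_trans _ (u' ++ v)).
  by have := rewrites_ctx [::] v ru.
by have := rewrites_ctx u' [::] rv; rewrite !cats0.
Qed.

Lemma is_rel_rev (l r : word k) : is_rel l r -> is_rel (rev l) (rev r).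
Proof.
case/orP=> [/existsP[i /andP[/eqP-> /eqP->]]|/existsP[i /existsP[j]]].
  by apply/orP; left; apply/existsP; exists i; rewrite /rev /= !eqxx.
case/and3P=> hij hji /andP[/eqP-> /eqP->]; apply/orP; right.
by apply/existsP; exists j; apply/existsP; exists i; rewrite /rev /= hij hji !eqxx.
Qed.

Lemma rewrites_rev u v : rewrites u v -> rewrites (rev u) (rev v).
Proof.
elim=> [u'|p l r q v' hr _ IH]; first exact: rewrites_refl.
have E s : rev (p ++ s ++ q) = rev q ++ rev s ++ rev p by rewrite !rev_cat catA.
by rewrite E; apply: rewrites_step (is_rel_rev hr) _; rewrite -E.
Qed.

Lemma rewrites_eqA u v : rewrites u v -> eqA (fwords [:: u]) (fwords [:: v]).
Proof.
elim=> [u'|p l r q v' hr _ IH]; first exact: eqA_coef.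
apply: eqA_trans IH; exists [:: (1%R, p, (l, r), q)]; split; first by rewrite /= hr.
move=> w; rewrite !coef_fwords big_cons big_nil addr0 /= mul1r !addn0.
by case: (_ == w); case: (_ == w).
Qed.

Lemma eqA_fwords_map (T : eqType) (s : seq T) (F G : T -> word k) :
  (forall x, x \in s -> rewrites (F x) (G x)) -> eqA (fwords (map F s)) (fwords (map G s)).
Proof.
elim: s => [|a s IH] FG; first exact: eqA_coef.
apply: (@eqA_cat (fwords [:: F a]) (fwords [:: G a])).
  by apply/rewrites_eqA/FG; rewrite mem_head.
by apply: IH => x xs; apply: FG; rewrite in_cons xs orbT.
Qed.

Definition commuting (a b : 'I_k.+1) := (ordS a != b) && (ordS b != a).

Lemma rewrites_swap p q a b :
  commuting a b -> rewrites (p ++ [:: a; b] ++ q) (p ++ [:: b; a] ++ q).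
Proof.
move=> /andP[ab ba]; apply: rewrites_step (rewrites_refl _).
by apply/orP; right; apply/existsP; exists a; apply/existsP; exists b; rewrite ab ba !eqxx.
Qed.

Lemma rewrites_to_front x s1 s2 : {in s1, forall y, commuting y x} ->
  rewrites (s1 ++ x :: s2) (x :: s1 ++ s2).
Proof.
elim: s1 => [|y s1 IH] comm /=; first exact: rewrites_refl.
apply: (@rewrites_trans _ (y :: x :: s1 ++ s2)).
  have := rewrites_ctx [:: y] [::] (IH (fun z zs => comm z (@mem_behead _ (y :: s1) _ zs))).
  by rewrite !cats0.
by apply: (rewrites_swap [::] (s1 ++ s2)); apply: comm; rewrite mem_head.
Qed.

(* Move the first letter x of s to the front of t: the letters it crosses commute
   with it, as a non-commuting y before x in t would also precede x in s. *)
Lemma rewrites_perm s t : uniq t -> perm_eq s t ->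
  (forall x y, x \in s -> y \in s -> x != y -> ~~ commuting x y ->
     subseq [:: x; y] t -> subseq [:: x; y] s) -> rewrites t s.
Proof.
elim: s t => [|x s IH] t ut pst ord.
  by move: (perm_size pst); case: t {pst ut ord} => // _; exact: rewrites_refl.
have xt : x \in t by rewrite -(perm_mem pst) mem_head.
case/splitPr: xt pst ut ord => t1 t2 pst ut ord.
have pm : perm_eq (t1 ++ x :: t2) (x :: t1 ++ t2) by rewrite -cat1s perm_catCA.
have xs : x \notin s by move: ut; rewrite -(perm_uniq pst) => /andP[].
apply: (@rewrites_trans _ (x :: t1 ++ t2)).
  apply: rewrites_to_front => y yt1; apply/negPn/negP => nc.
  have xNt1 : x \notin t1.
    by move: ut; rewrite cat_uniq => /and3P[_ /hasPn/(_ x)]; rewrite mem_head => /(_ isT).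
  have yx : y != x by apply: contraNneq xNt1 => <-.
  have ys : y \in x :: s by rewrite (perm_mem pst) mem_cat yt1.
  have yxt : subseq [:: y; x] (t1 ++ x :: t2).
    by rewrite -[[:: y; x]]cat1s; apply: cat_subseq; rewrite ?sub1seq ?mem_head.
  have := ord y x ys (mem_head _ _) yx nc yxt; rewrite /= (negbTE yx).
  by move/mem_subseq/(_ x); rewrite !inE eqxx orbT (negbTE xs) => /(_ isT).
have ut' : uniq (t1 ++ t2) by move: ut; rewrite (perm_uniq pm) => /andP[].
have := rewrites_ctx [:: x] [::] (IH (t1 ++ t2) ut' _ _); rewrite !cats0; apply.
  by move: (perm_trans pst pm); rewrite perm_cons.
move=> a b ha hb nab nc sab.
have : subseq [:: a; b] (x :: s).
  apply: ord; rewrite ?in_cons ?ha ?hb ?orbT //.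
  by apply: subseq_trans sab _; apply: cat_subseq => //; exact: subseq_cons.
by rewrite /=; case: eqP => // eax; rewrite -eax ha in xs.
Qed.

End FreeAlgebra.

Section RankOrder.
Variable k : nat.
Implicit Types (S X A B : {set 'I_k.+1}) (x y : 'I_k.+1).

Lemma card_neq_setT S : (#|S| <= k)%N -> S != setT.
Proof. by apply: contraTneq => ->; rewrite cardsT card_ord ltnn. Qed.

Lemma has_mex S : S != setT -> has (fun n => (inord n : 'I_k.+1) \notin S) (iota 0 k.+1).
Proof.
rewrite -properT => /properP[_ [x _ xS]].
by apply/hasP; exists (val x); rewrite ?mem_iota ?ltn_ord ?inord_val.
Qed.

Lemma mex_le S : S != setT -> (mex S <= k)%N.
Proof. by move=> /has_mex; rewrite has_find size_iota. Qed.

Lemma mex_neq S x : S != setT -> x \in S -> (x : nat) != mex S.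
Proof.
move=> nT xS; apply/eqP => xm.
have := nth_find 0%N (has_mex nT); rewrite -/(mex S) nth_iota ?add0n; last first.
  by rewrite -(size_iota 0 k.+1) -has_find has_mex.
by rewrite -xm inord_val xS.
Qed.

Lemma rkE S x : S != setT ->
  rk S x = if (mex S < x)%N then (x - mex S - 1)%N else (x + k - mex S)%N.
Proof.
move=> /mex_le mk; rewrite /rk; have := ltn_ord x; case: (ltnP (mex S) x) => mx xk.
  have -> : (x + k - mex S = (x - mex S - 1) + k.+1)%N by lia.
  by rewrite modnDr modn_small //; lia.
by rewrite modn_small //; lia.
Qed.

Lemma rk_inj S : S != setT -> injective (rk S).
Proof.
move=> nT x y; rewrite !rkE //; have := mex_le nT; have := ltn_ord x; have := ltn_ord y.
move=> yk xk mk; case: (ltnP (mex S) x); case: (ltnP (mex S) y) => ? ? ?;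
  by apply: val_inj => /=; lia.
Qed.

Lemma ordS_val x : (ordS x : nat) = if x == k :> nat then 0%N else x.+1.
Proof.
rewrite /=; case: eqP => [->|xk]; first by rewrite modnn.
by rewrite modn_small //; have := ltn_ord x; lia.
Qed.

(* The cyclic successor x + 1 follows x in I_S unless the cut of I_S (at mex S)
   falls between them, which is impossible when both lie in S. *)
Lemma rk_ordS S x : S != setT -> x \in S -> ordS x \in S -> x != ordS x ->
  (rk S x < rk S (ordS x))%N.
Proof.
move=> nT xS sS nx; have := mex_neq nT xS; have := mex_neq nT sS; have := mex_le nT.
have := ltn_ord x; have : (x : nat) != ordS x := nx; rewrite !rkE // ordS_val.
by case: (nat_of_ord x =P k) => [->|xk] ? ? ? ? ?; rewrite ?ltn0; repeat case: ifP => ?; lia.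
Qed.

Definition rk_ge S x y := (rk S y <= rk S x)%N.
Definition dec_enum S X := sort (rk_ge S) (enum X).
Definition split_word A B := dec_enum (A :|: B) A ++ rev (dec_enum (A :|: B) B).

Lemma perm_dec_enum S X : perm_eq (dec_enum S X) (enum X).
Proof. by rewrite /dec_enum perm_sort. Qed.

Lemma mem_dec_enum S X : dec_enum S X =i X.
Proof. by move=> y; rewrite (perm_mem (perm_dec_enum S X)) mem_enum. Qed.

Lemma uniq_dec_enum S X : uniq (dec_enum S X).
Proof. by rewrite (perm_uniq (perm_dec_enum S X)) enum_uniq. Qed.

Lemma size_dec_enum S X : size (dec_enum S X) = #|X|.
Proof. by rewrite (perm_size (perm_dec_enum S X)) cardE. Qed.

Lemma sorted_dec_enum S X : sorted (rk_ge S) (dec_enum S X).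
Proof. by apply: sort_sorted => a b; rewrite /rk_ge leq_total. Qed.

Lemma sorted_dec_enum_lt S X : S != setT ->
  sorted (fun a b => rk S b < rk S a)%N (dec_enum S X).
Proof.
move=> nT; apply: sorted_strict (uniq_dec_enum S X) (sorted_dec_enum S X) => a b.
by rewrite /rk_ge leq_eqVlt => ab /orP[/eqP/(rk_inj nT) ba|//]; rewrite ba eqxx in ab.
Qed.

Lemma subseq_ordS_dec_enum S X x : X \subset S -> S != setT ->
  x \in X -> ordS x \in X -> x != ordS x -> subseq [:: ordS x; x] (dec_enum S X).
Proof.
move=> XS nT xX sX nx; apply: (sorted_geq_subseq (sorted_dec_enum S X)).
- by rewrite mem_dec_enum.
- by rewrite mem_dec_enum.
by apply: rk_ordS => //; apply: (subsetP XS).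
Qed.

(* d_X already lists X decreasingly for I_X; for I_S only the relative order of
   non-commuting letters x, x + 1 matters, and both orders put x + 1 first. *)
Lemma rewrites_dA S X : X \subset S -> S != setT -> rewrites (dA X) (dec_enum S X).
Proof.
move=> XS nT; have nTX : X != setT.
  by apply: contraNneq nT => XT; rewrite eqEsubset subsetT -XT.
change (rewrites (dec_enum X X) (dec_enum S X)).
apply: rewrites_perm; rewrite ?uniq_dec_enum //.
  by rewrite (perm_trans (perm_dec_enum _ _)) // perm_sym perm_dec_enum.
move=> x y; rewrite !mem_dec_enum => xX yX xy /nandP[/negPn/eqP yE|/negPn/eqP xE].
  move=> xyd; suff /(uniq_subseq2 (uniq_dec_enum X X) xyd) xyE : subseq [:: y; x] (dec_enum X X).
    by rewrite xyE eqxx in xy.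
  by rewrite -yE; apply: subseq_ordS_dec_enum; rewrite ?subxx ?yE.
by move=> _; rewrite -xE; apply: subseq_ordS_dec_enum; rewrite ?xE // eq_sym.
Qed.

Lemma rewrites_dA_iA A B : (#|A :|: B| <= k)%N -> rewrites (dA A ++ iA B) (split_word A B).
Proof.
move=> ABk; have nT := card_neq_setT ABk.
apply: rewrites_cat; first exact: rewrites_dA (subsetUl A B) nT.
exact/rewrites_rev/(rewrites_dA (subsetUr A B) nT).
Qed.

End RankOrder.

Section HookWords.
Variable k : nat.
Implicit Types (u : word k) (m j : nat).

Lemma ltI_trans u : transitive (ltI u).
Proof. by move=> b a c; apply: ltn_trans. Qed.

Lemma gtI_trans u : transitive (gtI u).
Proof. by move=> b a c ba cb; apply: ltn_trans cb ba. Qed.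

Lemma ltI_irr u : irreflexive (ltI u).
Proof. by move=> a; apply: ltnn. Qed.

Lemma gtI_irr u : irreflexive (gtI u).
Proof. by move=> a; apply: ltnn. Qed.

Lemma gtI_ltIF u a b : gtI u a b -> ~~ ltI u a b.
Proof. by rewrite /gtI /ltI -leqNgt => /ltnW. Qed.

Lemma ascE u : asc u = nasc (ltI u) u.
Proof.
rewrite /asc; case: u => [|a s] /=; first by rewrite big_ord0.
move: (ltI (a :: s)) => R; elim: s a => [|b s IH] a /=; first by rewrite big_ord0.
by rewrite big_ord_recl /= -IH.
Qed.

Lemma asc_valley u j : (0 < j <= size u)%N ->
  sorted (gtI u) (take j u) -> sorted (ltI u) (drop j.-1 u) -> asc u = (size u - j)%N.
Proof.
case: j => // j /andP[_ ju] dec inc.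
rewrite ascE -[u in nasc _ u](cat_take_drop j) (drop_nth ord0 ju) nasc_cat -take_nth //.
rewrite (nasc_sorted_none (@gtI_ltIF u) dec) -drop_nth // (nasc_sorted inc) size_drop.
by rewrite subnS.
Qed.

Lemma asc_plateau u j : (0 < j < size u)%N -> nth ord0 u j.-1 = nth ord0 u j ->
  sorted (gtI u) (take j u) -> sorted (ltI u) (drop j u) -> asc u = (size u - j - 1)%N.
Proof.
case: j => // j /andP[_ ju] /= eq_nth dec inc.
have inc' := inc; rewrite (drop_nth ord0 ju) -eq_nth /= in inc'.
rewrite ascE -[u in nasc _ u](cat_take_drop j) (drop_nth ord0 (ltnW ju)) nasc_cat.
rewrite -take_nth ?(ltnW ju) // (nasc_sorted_none (@gtI_ltIF u) dec) (drop_nth ord0 ju).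
rewrite /= -eq_nth ltI_irr add0n.
have := @nasc_sorted _ _ (_ :: _) inc'; rewrite /= size_drop => ->.
by rewrite -subnDA addn1 subnS.
Qed.

(* [hookV] also accepts the witness 0, which describes the same words as 1. *)
Lemma hookV_valley u : hookV u -> (0 < size u)%N ->
  exists2 j, (0 < j <= size u)%N & sorted (gtI u) (take j u) && sorted (ltI u) (drop j.-1 u).
Proof.
case/existsP=> j /andP[dec inc] u_gt0; case: (posnP j) => [j0|j_gt0].
  exists 1%N; first by rewrite u_gt0.
  by move: inc; rewrite j0 /= => ->; case: {dec j j0 u_gt0} u => //= a s; rewrite take0.
by exists j; rewrite ?dec ?inc //; have := ltn_ord j; lia.
Qed.

Definition splits_at m u := sorted (gtI u) (take m u) && sorted (ltI u) (drop m u).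

Lemma hookV_splits_at u m : hookV u -> (asc u + m)%N = size u -> splits_at m u.
Proof.
case: (posnP (size u)) => [/size0nil-> //|u_gt0] /hookV_valley/(_ u_gt0)[j ju /andP[dec inc]].
rewrite (asc_valley ju dec inc) => mj; have -> : m = j by lia.
rewrite /splits_at dec /=.
have -> : drop j u = drop 1 (drop j.-1 u) by rewrite drop_drop; congr drop; lia.
exact: drop_sorted.
Qed.

Lemma hookV_splits_at_pred u m : hookV u -> ((asc u).+1 + m)%N = size u -> splits_at m u.
Proof.
case: (posnP (size u)) => [-> //|u_gt0] /hookV_valley/(_ u_gt0)[j ju /andP[dec inc]].
rewrite (asc_valley ju dec inc) => mj; have -> : m = j.-1 by lia.
rewrite /splits_at inc andbT -(@take_takel _ j.-1 j) ?leq_pred //.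
exact: take_sorted.
Qed.

Lemma hookU_splits_at u m : hookU u -> ((asc u).+1 + m)%N = size u -> splits_at m u.
Proof.
case/existsP=> j /and4P[j_gt0 /eqP eq_nth dec inc].
have ju : (0 < j < size u)%N by rewrite j_gt0 ltn_ord.
rewrite (asc_plateau ju eq_nth dec inc) => mj; have -> : m = j by lia.
by rewrite /splits_at dec inc.
Qed.

Lemma hookV_hookU u : hookV u -> hookU u -> False.
Proof.
case/existsP=> j0 /andP[dec inc] /existsP[j /and4P[j_gt0 /eqP eq_nth _ _]].
have ju := ltn_ord j; have jE : j.-1.+1 = j by rewrite prednK.
case: (ltnP j j0) => [jj0|j0j].
  have jt : (j.-1.+1 < size (take j0 u))%N by rewrite size_take_min; lia.
  have := sorted_nth_neq ord0 (@gtI_irr u) dec jt.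
  by rewrite jE !nth_take ?eq_nth ?eqxx //; lia.
have jd : ((j.-1 - j0.-1).+1 < size (drop j0.-1 u))%N by rewrite size_drop; lia.
have := sorted_nth_neq ord0 (@ltI_irr u) inc jd.
have -> : (j.-1 - j0.-1).+1 = (j - j0.-1)%N by lia.
by rewrite !nth_drop !subnKC ?eq_nth ?eqxx //; lia.
Qed.

Lemma valley_hookV u j : (0 < j <= size u)%N ->
  sorted (gtI u) (take j u) -> sorted (ltI u) (drop j.-1 u) -> hookV u && (asc u + j == size u).
Proof.
move=> ju dec inc; rewrite (asc_valley ju dec inc) subnK ?eqxx ?andbT; last by case/andP: ju.
have ju' : (j < (size u).+1)%N by case/andP: ju.
by apply/existsP; exists (Ordinal ju'); rewrite /= dec inc.
Qed.

Lemma plateau_hookU u j : (0 < j < size u)%N -> nth ord0 u j.-1 = nth ord0 u j ->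
  sorted (gtI u) (take j u) -> sorted (ltI u) (drop j u) -> hookU u && ((asc u).+1 + j == size u).
Proof.
move=> ju eq_nth dec inc; rewrite (asc_plateau ju eq_nth dec inc).
have -> : ((size u - j - 1).+1 + j)%N = size u by lia.
have /andP[j_gt0 ju'] := ju.
by rewrite eqxx andbT; apply/existsP; exists (Ordinal ju'); rewrite /= j_gt0 eq_nth eqxx dec inc.
Qed.

Lemma splits_at_interior_hook u m : supp u != setT -> (0 < m < size u)%N -> splits_at m u ->
  [|| hookV u && (asc u + m == size u), hookV u && ((asc u).+1 + m == size u)
    | hookU u && ((asc u).+1 + m == size u)].
Proof.
move=> nT /andP[m_gt0 mu] /andP[dec inc].
set p := nth ord0 u m.-1; set q := nth ord0 u m.
have mE : m.-1.+1 = m by rewrite prednK.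
have takeE : take m u = rcons (take m.-1 u) p by rewrite -take_nth mE //; lia.
have dropE : drop m u = q :: drop m.+1 u by rewrite (drop_nth ord0).
case: (ltngtP (rk (supp u) p) (rk (supp u) q)) => [pq|qp|/(rk_inj nT) pq].
- have inc' : sorted (ltI u) (drop m.-1 u).
    rewrite (drop_nth ord0) ?mE -/p ?dropE /=; last by lia.
    by apply/andP; split=> //; move: inc; rewrite dropE.
  by rewrite (valley_hookV _ dec inc') // m_gt0 ltnW.
- have dec' : sorted (gtI u) (take m.+1 u).
    by rewrite (take_nth ord0 mu) takeE; apply: sorted_rcons_rcons; rewrite // -takeE.
  have := valley_hookV (j := m.+1) _ dec' inc; rewrite addnS -addSn => -> //.
  by rewrite orbT.
- by rewrite (plateau_hookU _ pq dec inc) ?orbT // m_gt0.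
Qed.

Lemma splits_at_hook u m : supp u != setT -> (m <= size u)%N -> splits_at m u ->
  [|| hookV u && (asc u + m == size u), hookV u && ((asc u).+1 + m == size u)
    | hookU u && ((asc u).+1 + m == size u)].
Proof.
move=> nT mu split; case: (posnP m) => [m0|m_gt0].
  move: split; rewrite m0 /splits_at !addn0 => /andP[_ inc].
  case: (posnP (size u)) => [/size0nil u0|u_gt0].
    rewrite u0 /asc big_ord0; apply/orP; left.
    by apply/andP; split=> //; apply/existsP; exists ord0.
  have dec : sorted (gtI u) (take 1 u) by rewrite (take_nth ord0 u_gt0) take0.
  by rewrite -[(asc u).+1]addn1 (valley_hookV _ dec inc) ?orbT // u_gt0.
case: (ltngtP m (size u)) mu => // [m_lt|m_eq] _.
  by apply: splits_at_interior_hook; rewrite ?m_gt0.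
case/andP: split => dec _.
have inc : sorted (ltI u) (drop m.-1 u).
  by rewrite (drop_nth ord0) ?prednK ?m_eq ?drop_size //; lia.
by rewrite (valley_hookV _ dec inc) //; lia.
Qed.

Lemma hook_splits_atE u m : supp u != setT -> (m <= size u)%N ->
  [|| hookV u && (asc u + m == size u), hookV u && ((asc u).+1 + m == size u)
    | hookU u && ((asc u).+1 + m == size u)] = splits_at m u.
Proof.
move=> nT mu; apply/idP/idP; last exact: splits_at_hook.
case/or3P=> /andP[hook /eqP].
- exact: hookV_splits_at.
- exact: hookV_splits_at_pred.
- exact: hookU_splits_at.
Qed.

Lemma hook_count u m i : supp u != setT -> (m + i)%N = size u ->
  ((hookV u && (asc u == i)) + (hookV u && ((asc u).+1 == i))
    + (hookU u && ((asc u).+1 == i)))%N = splits_at m u.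
Proof.
move=> nT mi; rewrite -hook_splits_atE //; last by lia.
have -> : (asc u == i) = (asc u + m == size u) by apply/eqP/eqP; lia.
have -> : ((asc u).+1 == i) = ((asc u).+1 + m == size u) by apply/eqP/eqP; lia.
have := @hookV_hookU u; case: (hookV u); case: (hookU u) => //= [/(_ isT isT)[]|_].
by case: eqP; case: eqP => //; lia.
Qed.

End HookWords.

Section SplitWords.
Variable k : nat.
Implicit Types (A B : {set 'I_k.+1}) (x : word k).

Lemma supp_split_word A B : supp (split_word A B) = A :|: B.
Proof. by apply/setP => y; rewrite !inE mem_cat mem_rev !mem_dec_enum. Qed.

Lemma size_split_word A B : size (split_word A B) = (#|A| + #|B|)%N.
Proof. by rewrite size_cat size_rev !size_dec_enum. Qed.

Lemma card_supp x : (#|supp x| <= size x)%N.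
Proof. by rewrite cardsE card_size. Qed.

Lemma splits_at_split_word A B : (#|A :|: B| <= k)%N -> splits_at #|A| (split_word A B).
Proof.
move=> ABk; have nT := card_neq_setT ABk.
rewrite /splits_at {1 3}/split_word take_size_cat ?drop_size_cat ?size_dec_enum //.
rewrite /gtI /ltI supp_split_word rev_sorted !sorted_dec_enum_lt //.
Qed.

Lemma split_word_of_splits_at x m : (size x <= k)%N -> (m <= size x)%N -> splits_at m x ->
  [/\ #|[set y in take m x]| = m, #|[set y in drop m x]| = (size x - m)%N
    & split_word [set y in take m x] [set y in drop m x] = x].
Proof.
move=> xk mx /andP[dec inc].
have nT : supp x != setT by apply/card_neq_setT/(leq_trans (card_supp x)).
have udec := sorted_uniq (@gtI_trans k x) (@gtI_irr k x) dec.
have uinc := sorted_uniq (@ltI_trans k x) (@ltI_irr k x) inc.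
have suppE : [set y in take m x] :|: [set y in drop m x] = supp x.
  by apply/setP => y; rewrite !inE -mem_cat cat_take_drop.
have rk_ge_tr : transitive (rk_ge (supp x)) by move=> b a c ba cb; apply: leq_trans cb ba.
have rk_ge_anti : antisymmetric (rk_ge (supp x)).
  by move=> a b /andP[ba ab]; apply: (rk_inj nT); apply/eqP; rewrite eqn_leq; apply/andP.
have sorted_eq_dec_enum s : uniq s -> sorted (rk_ge (supp x)) s ->
    dec_enum (supp x) [set y in s] = s.
  move=> us ss; apply: (sorted_eq rk_ge_tr rk_ge_anti (sorted_dec_enum _ _) ss).
  apply: perm_trans (perm_dec_enum _ _) _; apply: uniq_perm; rewrite ?enum_uniq //.
  by move=> y; rewrite mem_enum inE.
have decE : dec_enum (supp x) [set y in take m x] = take m x.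
  by apply: sorted_eq_dec_enum => //; apply: sub_sorted dec => a b /ltnW.
have incE : dec_enum (supp x) [set y in drop m x] = rev (drop m x).
  rewrite -[[set y in drop m x]](_ : [set y in rev (drop m x)] = _); last first.
    by apply/setP => y; rewrite !inE mem_rev.
  apply: sorted_eq_dec_enum; rewrite ?rev_uniq // rev_sorted.
  by apply: sub_sorted inc => a b /ltnW.
split.
- by rewrite cardsE (card_uniqP udec) size_takel.
- by rewrite cardsE (card_uniqP uinc) size_drop.
by rewrite /split_word suppE decE incE revK cat_take_drop.
Qed.

Lemma split_word_inj A B x : split_word A B = x ->
  A = [set y in take #|A| x] /\ B = [set y in drop #|A| x].
Proof.
move=> <-; rewrite /split_word take_size_cat ?drop_size_cat ?size_dec_enum //.
by split; apply/setP => y; rewrite inE ?mem_rev mem_dec_enum.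
Qed.

Definition card_pairs m i : seq ({set 'I_k.+1} * {set 'I_k.+1}) :=
  [seq (A, B) | A <- enum [pred A : {set 'I_k.+1} | #|A| == m],
                B <- enum [pred B : {set 'I_k.+1} | #|B| == i]].

Lemma mem_card_pairs m i p : (p \in card_pairs m i) = (#|p.1| == m) && (#|p.2| == i).
Proof.
apply/idP/idP; last by case: p => A B /andP[A_m B_i]; apply: allpairs_f; rewrite mem_enum.
case/allpairsP => -[A B] [/= A_m B_i ->].
by move: A_m B_i; rewrite !mem_enum => A_m B_i; apply/andP.
Qed.

Lemma uniq_card_pairs m i : uniq (card_pairs m i).
Proof. by apply: allpairs_uniq; rewrite ?enum_uniq // => -[? ?] [? ?]. Qed.

Lemma coef_split_words m i x : (m + i <= k)%N ->
  coef (fwords [seq split_word p.1 p.2 | p <- card_pairs m i]) x =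
  ((size x == m + i) && splits_at m x).
Proof.
move=> mik; rewrite coef_fwords count_map.
rewrite (@count_uniq_single _ _ _ ([set y in take m x], [set y in drop m x])) ?uniq_card_pairs //;
  last first.
  move=> [A B]; rewrite mem_card_pairs /= => /andP[/eqP A_m _] /eqP /split_word_inj.
  by rewrite A_m => -[-> ->].
rewrite mem_card_pairs /=; congr (Posz (nat_of_bool _)).
case: (size x =P (m + i)%N) => [xmi|xmi] /=; last first.
  apply/negbTE; apply: contra_notN xmi => /andP[/andP[/eqP A_m /eqP B_i] /eqP <-].
  by rewrite size_split_word A_m B_i.
apply/idP/idP => [/andP[/andP[/eqP A_m /eqP B_i] /eqP xE]|split].
  rewrite -xE -{1}A_m splits_at_split_word //.
  by rewrite (leq_trans (leq_card_setU _ _)) // A_m B_i.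
have xk : (size x <= k)%N by rewrite xmi.
have mx : (m <= size x)%N by rewrite xmi leq_addr.
have [A_m B_i ->] := split_word_of_splits_at xk mx split.
by rewrite A_m B_i xmi addKn !eqxx.
Qed.

Lemma coef_tuple_words r (Q : pred (r.-tuple 'I_k.+1)) (P : pred (word k)) x :
  (forall t, Q t = P (val t)) ->
  coef (fwords [seq val t | t <- enum Q]) x = ((size x == r) && P x).
Proof.
move=> QP; rewrite coef_fwords count_uniq_mem ?(map_inj_uniq val_inj) ?enum_uniq //.
congr (Posz (nat_of_bool _)); case: (size x =P r) => [xr|xr] /=.
  rewrite -[x]/(val (Tuple (introT eqP xr))) (mem_map val_inj) mem_enum.
  exact: QP.
by apply/mapP => -[t _ xt]; apply: xr; rewrite xt size_tuple.
Qed.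

Lemma coef_Vset r (j : int) x :
  coef (Vset k r j) x = ((size x == r) && [&& proper_supp x, hookV x & Posz (asc x) == j]).
Proof. exact: (coef_tuple_words (P := fun u => [&& proper_supp u, hookV u & Posz (asc u) == j])).
Qed.

Lemma coef_Uset r (j : int) x :
  coef (Uset k r j) x = ((size x == r) && [&& proper_supp x, hookU x & Posz (asc x) == j]).
Proof. exact: (coef_tuple_words (P := fun u => [&& proper_supp u, hookU u & Posz (asc u) == j])).
Qed.

End SplitWords.

Unset Implicit Arguments.
Local Open Scope ring_scope.

Theorem lemma7p4 (k r i : nat) (hir : (i <= r)%N) (hrk : (r <= k)%N) :
  eqA (fmul (ncsym_h k (r - i)) (ncsym_e k i))
      (fadd (Vset k r i%:Z) (fadd (Vset k r (i%:Z - 1)) (Uset k r (i%:Z - 1)))).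
Proof.
rewrite /ncsym_h /ncsym_e fmul_fwords -/(card_pairs k (r - i)%N i).
apply: eqA_trans (eqA_fwords_map (G := fun p => split_word p.1 p.2) _) _.
  move=> [A B]; rewrite mem_card_pairs => /andP[/eqP A_m /eqP B_i].
  by apply: rewrites_dA_iA; rewrite (leq_trans (leq_card_setU _ _)) // A_m B_i subnK.
apply: eqA_coef => x; rewrite coef_split_words ?subnK // /fadd !coef_cat.
rewrite !coef_Vset coef_Uset !eqz_nat !eq_Posz_pred.
case: (size x =P r) => [xr|_] //=.
have nT : proper_supp x by apply/card_neq_setT; rewrite (leq_trans (card_supp x)) ?xr.
by rewrite nT -!PoszD addnA (hook_count (m := (r - i)%N)) // xr subnK.
Qed.
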